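(* Let $\mathbb{K}$ be a field of characteristic zero and let $f=\frac{b}{c\,d^\lambda}\in\mathbb{K}(x,y,z)$, where $\lambda$ is a positive integer, $b,d\in\mathbb{K}[x,y,z]$, $c\in\mathbb{K}[x,y]$, $d$ is irreducible, $b,c,d$ are primitive as polynomials in $y,z$, and $\deg_z(b)<\deg_z(d)$. Suppose there is a positive integer $m$ with $\sigma_x^m(d)=\sigma_y^n\sigma_z^k(d)$ for some $n,k\in\mathbb{Z}$; let $m$ be the smallest such positive integer and fix integers $n,k$ with $\sigma_x^m(d)=\sigma_y^n\sigma_z^k(d)$. If one of the following holds: (i) there exist $n_1,n_2,k_1,k_2\in\mathbb{Z}$ with $n_1,n_2>0$ such that $\sigma_y^{n_1}(d)=\sigma_z^{k_1}(d)$ and $\sigma_x^{n_2}(c)=\sigma_y^{k_2}(c)$; (ii) there exists a positive integer $t$ such that $\sigma_x^{tm}(c)=\sigma_y^{tn}(c)$; then $f$ has a telescoper.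
   Context: $\sigma_x,\sigma_y,\sigma_z$ are the shift automorphisms of $\mathbb{K}(x,y,z)$: $\sigma_x(f)=f(x+1,y,z)$, $\sigma_y(f)=f(x,y+1,z)$, $\sigma_z(f)=f(x,y,z+1)$. A rational function $g\in\mathbb{K}(x,y,z)$ is $(\sigma_y,\sigma_z)$-summable if $g=\sigma_y(u)-u+\sigma_z(v)-v$ for some $u,v\in\mathbb{K}(x,y,z)$. A telescoper for $f$ is a nonzero operator $L=\sum_i \ell_i S_x^i$ with $\ell_i\in\mathbb{K}(x)$ such that $L(f)=\sum_i\ell_i f(x+i,y,z)$ is $(\sigma_y,\sigma_z)$-summable. *)

From HB Require Import structures.
From mathcomp Require Import all_boot all_order all_algebra.
From mathcomp Require Import fraction generic_quotient.
From mathcomp.multinomials Require Import mpoly.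
Set Implicit Arguments. Unset Strict Implicit. Unset Printing Implicit Defensive.
Import GRing.Theory.
Local Open Scope ring_scope.

Notation "x %:F" := (@FracField.tofrac _ x) : ring_scope.

Definition ix : 'I_3 := @Ordinal 3 0 isT.
Definition iy : 'I_3 := @Ordinal 3 1 isT.
Definition iz : 'I_3 := @Ordinal 3 2 isT.

Section Defs.
Variable K : fieldType.

Notation P := {mpoly K[3]}.
Notation RF := {fraction P}.

(* p(x,y,z) |-> p(x+a, y+b, z+c), i.e. sigma_x^a sigma_y^b sigma_z^c on K[x,y,z] *)
Definition shift (a b c : int) (p : P) : P :=
  comp_mpoly [tuple 'X_ix + (a%:~R)%:MP; 'X_iy + (b%:~R)%:MP; 'X_iz + (c%:~R)%:MP] p.

Definition fshift (a b c : int) (u : RF) : RF :=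
  let r := repr u in (shift a b c (\n_r))%:F / (shift a b c (\d_r))%:F.

Definition sigma_x (u : RF) : RF := fshift 1 0 0 u.
Definition sigma_y (u : RF) : RF := fshift 0 1 0 u.
Definition sigma_z (u : RF) : RF := fshift 0 0 1 u.

Definition in_Kx (p : P) : Prop :=
  forall m, m \in msupp p -> (m iy = 0)%N /\ (m iz = 0)%N.
Definition in_Kxy (p : P) : Prop :=
  forall m, m \in msupp p -> (m iz = 0)%N.
Definition in_Kx_frac (u : RF) : Prop :=
  exists p q : P, [/\ in_Kx p, in_Kx q, q != 0 & u = p%:F / q%:F].

Definition mdvd (g p : P) : Prop := exists h : P, p = g * h.

(* primitive as a polynomial in y,z over K[x]: every common divisor of the
   coefficients (an element of K[x] dividing p) is a constant *)
Definition primitive_yz (p : P) : Prop :=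
  forall g : P, in_Kx g -> mdvd g p -> (msize g <= 1)%N.

Definition mirreducible (p : P) : Prop :=
  (1 < msize p)%N /\ forall g h : P, p = g * h -> (msize g <= 1)%N \/ (msize h <= 1)%N.

Definition degz (p : P) : nat := \max_(m <- msupp p) m iz.

Definition summable_yz (g : RF) : Prop :=
  exists u v : RF, g = sigma_y u - u + (sigma_z v - v).

(* L = sum_i l_i S_x^i with l_i in K(x), L <> 0, and L(f) summable *)
Definition has_telescoper (f : RF) : Prop :=
  exists l : seq RF,
    [/\ forall r, r \in l -> in_Kx_frac r,
        has (fun r => r != 0) l &
        summable_yz (\sum_(i < size l) l`_i * fshift (Posz i) 0 0 f)].
End Defs.

From HB Require Import structures.
From mathcomp Require Import all_boot all_order all_algebra.
From mathcomp Require Import fraction generic_quotient.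
From mathcomp.multinomials Require Import mpoly.
From mathcomp Require Import ring zify.
Set Implicit Arguments. Unset Strict Implicit. Unset Printing Implicit Defensive.
Import GRing.Theory.
Local Open Scope ring_scope.

(* Only one consequence of the hypotheses is used: c and d, hence the whole
   denominator q = c d^lam, are fixed by a common shift
   sigma = sigma_x^M sigma_y^A sigma_z^B with M > 0.  The shifts fixing a
   polynomial form a subgroup of Z^3, and c, lying in K[x,y], is fixed by every
   sigma_z^e; in both cases (i) and (ii) an integer combination of the given
   relations produces such a common shift.  Shifts do not raise the total
   degree, so the polynomials sigma^j(b) lie in a finite-dimensional space and
   satisfy a nontrivial relation sum_j kap_j sigma^j(b) = 0 with kap_j in K.
   Since sigma^j(f) = sigma^j(b) / q, the operator L = sum_j kap_j S_x^(jM) gives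
   L(f) = sum_j kap_j (sigma_x^(jM) f - sigma_y^(jA) sigma_z^(jB) sigma_x^(jM) f),
   and every difference g - sigma_y^a sigma_z^b g telescopes into a
   (sigma_y, sigma_z)-summable function.  Primitivity of c and irreducibility
   of d serve only to make the denominator nonzero. *)

Lemma comp_mpolyA (n k l : nat) (R : comNzRingType) (lq : k.-tuple {mpoly R[l]})
    (lr : n.-tuple {mpoly R[k]}) (p : {mpoly R[n]}) :
  p \mPo lr \mPo lq = p \mPo map_tuple (comp_mpoly lq) lr.
Proof.
rewrite [p \mPo lr]comp_mpolyE [RHS]comp_mpolyE raddf_sum /=; apply: eq_bigr => m _.
rewrite linearZ /= rmorph_prod /=; congr (_ *: _); apply: eq_bigr => i _.
by rewrite rmorphXn tnth_map.
Qed.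

Section MsizeComp.
Variables (n k : nat) (R : idomainType).

Lemma msizeM_leq (p q : {mpoly R[k]}) : (msize (p * q) <= (msize p + msize q).-1)%N.
Proof.
have [->|p0] := eqVneq p 0; first by rewrite mul0r msize0.
have [->|q0] := eqVneq q 0; first by rewrite mulr0 msize0.
by rewrite msizeM.
Qed.

Lemma msize_prod_leq (I : Type) (r : seq I) (F : I -> {mpoly R[k]}) (w : I -> nat) :
    (forall i, msize (F i) <= (w i).+1)%N ->
  (msize (\prod_(i <- r) F i) <= (\sum_(i <- r) w i).+1)%N.
Proof.
move=> hF; elim: r => [|i r IH]; first by rewrite !big_nil msize1.
rewrite !big_cons; apply: leq_trans (msizeM_leq _ _) _.
by have := hF i; move: IH; lia.
Qed.

Lemma msize_comp_mpoly_leq (lq : n.-tuple {mpoly R[k]}) (p : {mpoly R[n]}) :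
  (forall i, msize (tnth lq i) <= 2)%N -> (msize (p \mPo lq) <= msize p)%N.
Proof.
move=> hlq; rewrite comp_mpolyE; apply: leq_trans (msize_sum _ _ _) _.
apply/bigmax_leqP_seq => m /msize_mdeg_lt hm _.
apply: leq_trans (msizeZ_le _ _) _; apply: leq_trans hm; rewrite mdegE.
apply: msize_prod_leq => i; rewrite -[m i]card_ord -prodr_const.
have := @msize_prod_leq _ (index_enum 'I_(m i)) (fun=> tnth lq i) (fun=> 1%N) (fun=> hlq i).
by rewrite sum1_card card_ord.
Qed.

End MsizeComp.

Lemma msize_bounded_lin_dep (n s : nat) (K : fieldType) (g : nat -> {mpoly K[n]}) :
    (forall j, msize (g j) <= s)%N ->
  exists (N : nat) (kap : nat -> K),
    (exists2 j, (j <= N)%N & kap j != 0) /\ \sum_(j < N.+1) kap j *: g j = 0.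
Proof.
move=> hg; pose T : finType := ('X_{1..n < s})%type.
pose A : 'M[K]_(#|T|.+1, #|T|) := \matrix_(j, i) (g j)@_(val (enum_val i)).
have : kermx A != 0.
  by rewrite kermx_eq0 -row_leq_rank -ltnNge ltnS rank_leq_col.
case/rowV0Pn => v /sub_kermxP hv /rV0Pn [j0 vj0].
exists #|T|, (fun j => if (j < #|T|.+1)%N then v 0 (inord j) else 0); split.
  by exists j0; rewrite ?ltn_ord ?inord_val // -ltnS ltn_ord.
apply/mpolyP => m; rewrite mcoeff0 raddf_sum /=.
have [hm|hm] := ltnP (mdeg m) s.
  have := congr1 (fun M : 'M[K]_(1, #|T|) => M 0 (enum_rank (BMultinom hm : T))) hv.
  rewrite !mxE => hm0; apply: etrans hm0; apply: eq_bigr => j _.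
  by rewrite ltn_ord inord_val mcoeffZ mxE enum_rankK.
rewrite big1 // => j _; rewrite mcoeffZ memN_msupp_eq0 ?mulr0 //.
exact/msize_mdeg_ge/(leq_trans (hg j)).
Qed.

Section BigNatDvdn.
Variables (R : Type) (idx : R) (op : Monoid.law idx).

Lemma big_nat_dvdn (M N : nat) (F : nat -> R) : (0 < M)%N ->
  \big[op/idx]_(0 <= i < N * M | (M %| i)%N) F i = \big[op/idx]_(0 <= j < N) F (j * M)%N.
Proof.
move=> M_gt0; rewrite big_mkcond big_nat_mul; apply: eq_bigr => j _.
rewrite mulSn addnC -{1}[(j * M)%N]add0n big_addn addKn.
case: M M_gt0 => // M _; rewrite big_ltn // add0n dvdn_mull //.
rewrite big1_seq ?Monoid.mulm1 // => i /andP[_]; rewrite mem_index_iota => /andP[i_gt0 i_lt].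
by rewrite (dvdn_addl _ (dvdn_mull _ (dvdnn _))) gtnNdvd.
Qed.

End BigNatDvdn.

Section FracRepr.
Variable R : idomainType.
Implicit Types (p q : R) (u : {fraction R}).

Lemma frac_repr u : u = (\n_(repr u))%:F / (\d_(repr u))%:F.
Proof.
apply: (canRL (mulfK _)); first by rewrite tofrac_eq0 denom_ratioP.
rewrite -{1}[u]reprK !piE; apply/eqmodP; rewrite /= FracField.equivfE /FracField.mulf.
by rewrite !numden_Ratio ?mulf_neq0 ?oner_eq0 ?denom_ratioP // !mulr1 mulrC.
Qed.

Lemma fracP u : exists p q, q != 0 /\ u = p%:F / q%:F.
Proof. by exists (\n_(repr u)), (\d_(repr u)); rewrite -frac_repr denom_ratioP. Qed.

Lemma eq_frac p q p' q' : q != 0 -> q' != 0 ->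
  (p%:F / q%:F == p'%:F / q'%:F :> {fraction R}) = (p * q' == p' * q).
Proof. by move=> q0 q'0; rewrite eqr_div ?tofrac_eq0 // -!tofracM tofrac_eq. Qed.

End FracRepr.

HB.instance Definition _ (K : fieldType) (a b c : int) :=
  GRing.RMorphism.copy (@shift K a b c) (comp_mpoly _).

Section Shift.
Variable K : fieldType.
Notation P := {mpoly K[3]}.
Notation RF := {fraction P}.
Implicit Types (a b c : int) (p q : P) (u v : RF).

Lemma shift_shift a b c a' b' c' p :
  shift a b c (shift a' b' c' p) = shift (a + a') (b + b') (c + c') p.
Proof.
rewrite /shift comp_mpolyA; congr comp_mpoly; apply: eq_from_tnth => i.
rewrite tnth_map; case: i => [[|[|[|i]]] Hi] //; rewrite /tnth /=;
  by rewrite raddfD /= comp_mpolyXU comp_mpolyC /= intrD mpolyCD addrA.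
Qed.

Lemma shift0 p : shift 0 0 0 p = p.
Proof.
rewrite /shift -[RHS]comp_mpoly_id; congr comp_mpoly; apply: eq_from_tnth => i.
rewrite tnth_mktuple; case: i => [[|[|[|i]]] Hi] //; rewrite /tnth /= mpolyC0 addr0;
  by congr (mpolyX _ _); apply: val_inj.
Qed.

Lemma shiftK a b c : cancel (@shift K a b c) (shift (- a) (- b) (- c)).
Proof. by move=> p; rewrite shift_shift !addNr shift0. Qed.

Lemma shift_inj a b c : injective (@shift K a b c).
Proof. exact: can_inj (shiftK a b c). Qed.

Lemma shift_eq0 a b c p : (shift a b c p == 0) = (p == 0).
Proof. by rewrite -{1}(rmorph0 (@shift K a b c)) (inj_eq (@shift_inj a b c)). Qed.

Lemma msize_shift_leq a b c p : (msize (shift a b c p) <= msize p)%N.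
Proof.
apply: msize_comp_mpoly_leq => -[[|[|[|i]]] Hi] //; rewrite /tnth /=;
  apply: leq_trans (msizeD_le _ _) _;
  by rewrite geq_max msizeC msizeX mdeg1; case: (_ != 0).
Qed.

Lemma fshift_frac a b c p q : q != 0 ->
  fshift a b c (p%:F / q%:F) = (shift a b c p)%:F / (shift a b c q)%:F.
Proof.
move=> q0; rewrite /fshift; set u := p%:F / q%:F.
have /eqP : u = (\n_(repr u))%:F / (\d_(repr u))%:F := frac_repr u.
rewrite eq_frac ?denom_ratioP // => /eqP/(congr1 (shift a b c)); rewrite !rmorphM => e.
by apply/eqP; rewrite eq_frac ?shift_eq0 ?denom_ratioP // e.
Qed.

Lemma fshift_is_monoid_morphism a b c : monoid_morphism (@fshift K a b c).
Proof.
split=> [|u v].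
  by rewrite -[1]divr1 -tofrac1 fshift_frac ?oner_eq0 // rmorph1 tofrac1 divr1.
have [p [q [q0 ->]]] := fracP u; have [p' [q' [q'0 ->]]] := fracP v.
rewrite mulf_div -!tofracM !fshift_frac ?mulf_neq0 //.
by rewrite mulf_div -!tofracM !rmorphM.
Qed.

Lemma fshiftC a b c (k : K) : fshift a b c (k%:MP)%:F = (k%:MP)%:F.
Proof.
by rewrite -[_%:F]divr1 -tofrac1 fshift_frac ?oner_eq0 // rmorph1 /shift comp_mpolyC.
Qed.

Lemma fshift_is_zmod_morphism a b c : zmod_morphism (@fshift K a b c).
Proof.
have fshiftD u v : fshift a b c (u + v) = fshift a b c u + fshift a b c v.
  have [p [q [q0 ->]]] := fracP u; have [p' [q' [q'0 ->]]] := fracP v.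
  rewrite addf_div ?tofrac_eq0 // -!tofracM -tofracD !fshift_frac ?mulf_neq0 //.
  by rewrite addf_div ?tofrac_eq0 ?shift_eq0 // -!tofracM -tofracD rmorphD !rmorphM.
move=> u v; rewrite fshiftD; congr (_ + _).
have -> : - v = ((-1 : K)%:MP)%:F * v by rewrite mpolyCN tofracN tofrac1 mulN1r.
by rewrite (fshift_is_monoid_morphism a b c).2 fshiftC mpolyCN tofracN tofrac1 mulN1r.
Qed.

End Shift.

HB.instance Definition _ (K : fieldType) (a b c : int) :=
  GRing.isZmodMorphism.Build _ _ (@fshift K a b c) (@fshift_is_zmod_morphism K a b c).
HB.instance Definition _ (K : fieldType) (a b c : int) :=
  GRing.isMonoidMorphism.Build _ _ (@fshift K a b c) (@fshift_is_monoid_morphism K a b c).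

Section ShiftFixed.
Variable K : fieldType.
Notation P := {mpoly K[3]}.
Notation RF := {fraction P}.
Implicit Types (a b c : int) (p q : P) (u v : RF).

Lemma fshift_fshift a b c a' b' c' u :
  fshift a b c (fshift a' b' c' u) = fshift (a + a') (b + b') (c + c') u.
Proof.
have [p [q [q0 ->]]] := fracP u.
by rewrite [fshift a' _ _ _]fshift_frac // !fshift_frac ?shift_eq0 // !shift_shift.
Qed.

Lemma fshift0 u : fshift 0 0 0 u = u.
Proof. by have [p [q [q0 ->]]] := fracP u; rewrite fshift_frac // !shift0. Qed.

Definition shift_fixed p a b c := shift a b c p = p.

Lemma shift_fixed_eq p a b c a' b' c' : shift a b c p = shift a' b' c' p ->
  shift_fixed p (a - a') (b - b') (c - c').
Proof.
move/(congr1 (shift (- a') (- b') (- c'))).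
by rewrite !shift_shift !addNr shift0 !(addrC (- _)).
Qed.

Lemma shift_fixedD p a b c a' b' c' : shift_fixed p a b c -> shift_fixed p a' b' c' ->
  shift_fixed p (a + a') (b + b') (c + c').
Proof. by rewrite /shift_fixed -shift_shift => h ->. Qed.

Lemma shift_fixedMz p a b c (z : int) : shift_fixed p a b c ->
  shift_fixed p (a * z) (b * z) (c * z).
Proof.
move=> h; have hnat (j : nat) : shift_fixed p (a * j) (b * j) (c * j).
  elim: j => [|j IH]; first by rewrite !mulr0 /shift_fixed shift0.
  by rewrite intS !mulrDr !mulr1; apply: shift_fixedD.
case: z => j; first exact: hnat.
by rewrite NegzE !mulrN /shift_fixed -{1}(hnat j.+1) shiftK.
Qed.

Lemma shift_fixed_lincomb p (z z' : int) a b c a' b' c' A B C :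
    shift_fixed p a b c -> shift_fixed p a' b' c' ->
    A = a * z + a' * z' -> B = b * z + b' * z' -> C = c * z + c' * z' ->
  shift_fixed p A B C.
Proof. by move=> h h' -> -> ->; apply: shift_fixedD; apply: shift_fixedMz. Qed.

Lemma shift_fixed_Kxy p c : in_Kxy p -> shift_fixed p 0 0 c.
Proof.
move=> hp; rewrite /shift_fixed /shift comp_mpolyE [RHS]mpolyE; apply: eq_big_seq => m hm.
congr (_ *: _); rewrite [RHS]mpolyXE_id; apply: eq_bigr => -[[|[|[|i]]] Hi] _ //;
  rewrite /tnth /= ?mpolyC0 ?addr0.
- by congr (_ ^+ _); congr (mpolyX _ _); apply: val_inj.
- by congr (_ ^+ _); congr (mpolyX _ _); apply: val_inj.
- have -> : Ordinal Hi = iz by apply: val_inj.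
  by rewrite (hp m hm) !expr0.
Qed.

End ShiftFixed.

Section Telescoper.
Variable K : fieldType.
Notation P := {mpoly K[3]}.
Notation RF := {fraction P}.
Implicit Types (a b c : int) (p q : P) (f g u v : RF).

Lemma summable0 : summable_yz (0 : RF).
Proof. by exists 0, 0; rewrite /sigma_y /sigma_z !rmorph0 !subrr addr0. Qed.

Lemma fshift_subD a b c u u' :
  fshift a b c (u + u') - (u + u') = (fshift a b c u - u) + (fshift a b c u' - u').
Proof. by rewrite rmorphD opprD addrACA. Qed.

Lemma summableD g g' : summable_yz g -> summable_yz g' -> summable_yz (g + g').
Proof.
move=> [u [v ->]] [u' [v' ->]]; exists (u + u'), (v + v').
by rewrite /sigma_y /sigma_z !fshift_subD addrACA.
Qed.

Lemma summableMl f g : sigma_y f = f -> sigma_z f = f ->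
  summable_yz g -> summable_yz (f * g).
Proof.
rewrite /sigma_y /sigma_z => fy fz [u [v ->]]; exists (f * u), (f * v).
by rewrite /sigma_y /sigma_z !rmorphM /= fy fz mulrDr !mulrBr.
Qed.

Lemma summableN g : summable_yz g -> summable_yz (- g).
Proof. by rewrite -mulN1r; apply: summableMl; rewrite /sigma_y /sigma_z rmorphN1. Qed.

Lemma summable_sum (I : Type) (r : seq I) (F : I -> RF) :
  (forall i, summable_yz (F i)) -> summable_yz (\sum_(i <- r) F i).
Proof. by move=> hF; apply: big_ind => //; [exact: summable0 | exact: summableD]. Qed.

Lemma summable_shift_mulz a b : (forall u, summable_yz (fshift 0 a b u - u)) ->
  forall (z : int) g, summable_yz (fshift 0 (a * z) (b * z) g - g).
Proof.
move=> hab; have hnat (j : nat) g : summable_yz (fshift 0 (a * j) (b * j) g - g).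
  have := telescope_sumr (fun i : nat => fshift 0 (a * i) (b * i) g) (leq0n j).
  rewrite !mulr0 fshift0 => <-; apply: summable_sum => i.
  rewrite [in fshift 0 _ _ g](intS i) !mulrDr !mulr1 -[X in fshift X]addr0 -fshift_fshift.
  exact: hab.
case=> j g; first exact: hnat.
rewrite NegzE !mulrN; set h := fshift _ _ _ g.
have -> : g = fshift 0 (a * j.+1) (b * j.+1) h by rewrite fshift_fshift !addrN ?addr0 fshift0.
by rewrite -opprB; apply/summableN/hnat.
Qed.

Lemma summable_shift a b g : summable_yz (fshift 0 a b g - g).
Proof.
have hy (z : int) u : summable_yz (fshift 0 (1 * z) (0 * z) u - u).
  by apply: summable_shift_mulz => v; exists v, 0; rewrite /sigma_z rmorph0 subrr addr0.
have hz (z : int) u : summable_yz (fshift 0 (0 * z) (1 * z) u - u).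
  by apply: summable_shift_mulz => v; exists 0, v; rewrite /sigma_y rmorph0 subrr add0r.
set h := fshift 0 (0 * b) (1 * b) g.
have -> : fshift 0 a b g - g = (fshift 0 (1 * a) (0 * a) h - h) + (h - g).
  by rewrite addrA subrK fshift_fshift !mul1r !mul0r !addr0 add0r.
by apply: summableD; [exact: hy | exact: hz].
Qed.

Lemma in_Kx_frac_C (k : K) : in_Kx_frac (k%:MP : P)%:F.
Proof.
have in_Kx_C (k' : K) : in_Kx (k'%:MP : P).
  by move=> m; rewrite msuppC; case: eqP => // _; rewrite inE => /eqP ->; rewrite !mnm0E.
by exists k%:MP, 1; rewrite -mpolyC1 mpolyC_eq0 oner_neq0 tofrac1 divr1; split.
Qed.

Lemma has_telescoper_sparse f (M N : nat) (kap : nat -> K) : (0 < M)%N ->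
    (exists2 j, (j <= N)%N & kap j != 0) ->
    summable_yz (\sum_(j < N.+1) ((kap j)%:MP)%:F * fshift (M * j)%N 0 0 f) ->
  has_telescoper f.
Proof.
move=> M_gt0 [j0 j0_le kap_j0] hsum.
pose l := mkseq (fun i => if (M %| i)%N then ((kap (i %/ M)%N)%:MP : P)%:F else 0)
                (N.+1 * M).
exists l; split.
- move=> r /mapP[i _ ->]; case: ifP => _; first exact: in_Kx_frac_C.
  by rewrite -tofrac0 -(mpolyC0 _ K); exact: in_Kx_frac_C.
- apply/hasP; exists ((kap j0)%:MP : P)%:F; last by rewrite tofrac_eq0 mpolyC_eq0.
  apply/mapP; exists (j0 * M)%N; last by rewrite dvdn_mull // mulnK.
  by rewrite mem_iota add0n ltn_pmul2r.
rewrite size_mkseq.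
have -> : \sum_(i < N.+1 * M) l`_i * fshift i 0 0 f =
    \sum_(0 <= i < N.+1 * M | (M %| i)%N) ((kap (i %/ M)%N)%:MP : P)%:F * fshift i 0 0 f.
  rewrite [RHS]big_mkcond big_mkord; apply: eq_bigr => i _.
  by rewrite nth_mkseq //; case: ifP; rewrite ?mul0r.
rewrite big_nat_dvdn // big_mkord.
by under eq_bigr do rewrite mulnK // mulnC.
Qed.

Lemma has_telescoper_shift_fixed (b q : P) (M : nat) A B : q != 0 -> (0 < M)%N ->
  shift_fixed q M A B -> has_telescoper (b%:F / q%:F).
Proof.
move=> q0 M_gt0 hq; set f := b%:F / q%:F.
pose g (j : nat) := shift (M * j)%N (A * j) (B * j) b.
have g_bounded j : (msize (g j) <= msize b)%N by apply: msize_shift_leq.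
have [N [kap [kap_nz hdep]]] := msize_bounded_lin_dep g_bounded.
apply: (has_telescoper_sparse M_gt0 kap_nz).
pose c j : RF := ((kap j)%:MP : P)%:F.
have split_term j : c j * fshift (M * j)%N 0 0 f =
    - (c j * (fshift 0 (A * j) (B * j) (fshift (M * j)%N 0 0 f) - fshift (M * j)%N 0 0 f))
    + (kap j *: g j)%:F / q%:F.
  have hqj : shift_fixed q (M * j)%N (A * j) (B * j) by rewrite PoszM; exact: shift_fixedMz.
  have -> : fshift 0 (A * j) (B * j) (fshift (M * j)%N 0 0 f) = (g j)%:F / q%:F.
    by rewrite fshift_fshift add0r !addr0 fshift_frac // hqj.
  by rewrite -mul_mpolyC tofracM -mulrA mulrBr opprB subrK.
rewrite (eq_bigr _ (fun (j : 'I_N.+1) _ => split_term j)) big_split /=.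
rewrite -mulr_suml -rmorph_sum /= hdep tofrac0 mul0r addr0; apply: summable_sum => j.
apply/summableN/summableMl; rewrite /sigma_y /sigma_z ?fshiftC //.
exact: summable_shift.
Qed.

End Telescoper.

Section CommonPeriod.
Variable K : fieldType.
Notation P := {mpoly K[3]}.
Implicit Types (c d p : P).

Lemma primitive_yz_neq0 p : primitive_yz p -> p != 0.
Proof.
move=> hp; apply/eqP => p0.
have : (msize ('X_ix : P) <= 1)%N.
  apply: hp; last by exists 0; rewrite p0 mulr0.
  by move=> m; rewrite msuppX inE => /eqP ->; rewrite !mnm1E.
by rewrite msizeX mdeg1.
Qed.

Lemma mirreducible_neq0 p : mirreducible p -> p != 0.
Proof. by case=> hp _; apply: contraTneq hp => ->; rewrite msize0. Qed.

Lemma common_period_yz c d (m n2 n1 : nat) (n k k1 k2 : int) : in_Kxy c ->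
    shift m 0 0 d = shift 0 n k d -> shift 0 n1 0 d = shift 0 0 k1 d ->
    shift n2 0 0 c = shift 0 k2 0 c ->
  let A := - (m%:Z * n1 * k2) in let B := - (k * n1 * n2) - k1 * (n * n2 - m%:Z * k2) in
  shift_fixed c (m * n1 * n2)%N A B /\ shift_fixed d (m * n1 * n2)%N A B.
Proof.
move=> hc /shift_fixed_eq hd1 /shift_fixed_eq hd2 /shift_fixed_eq hc1 A B.
rewrite !subr0 !sub0r in hd1 hd2 hc1; split.
(* For d, the y-components n1 n2 (-n) + (n n2 - m k2) n1 reduce to A. *)
  by apply: (shift_fixed_lincomb (z := m%:Z * n1) (z' := B) hc1 (shift_fixed_Kxy 1 hc));
    rewrite /A /B ?PoszM; ring.
by apply: (shift_fixed_lincomb (z := n1%:Z * n2) (z' := n * n2 - m%:Z * k2) hd1 hd2);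
  rewrite /A /B ?PoszM; ring.
Qed.

Lemma common_period_power c d (m t : nat) (n k : int) : in_Kxy c ->
    shift m 0 0 d = shift 0 n k d -> shift (t * m)%N 0 0 c = shift 0 (t%:Z * n) 0 c ->
  shift_fixed c (t * m)%N (- (t%:Z * n)) (- (t%:Z * k)) /\
  shift_fixed d (t * m)%N (- (t%:Z * n)) (- (t%:Z * k)).
Proof.
move=> hc /shift_fixed_eq hd /shift_fixed_eq hct.
rewrite !subr0 !sub0r in hd hct; split.
  apply: (shift_fixed_lincomb (z := 1) (z' := 1) hct (shift_fixed_Kxy (- (t%:Z * k)) hc));
  by ring.
by apply: (shift_fixed_lincomb (z := t) (z' := 0) hd hd); rewrite ?PoszM; ring.
Qed.

End CommonPeriod.

Unset Implicit Arguments.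
Set Strict Implicit.
Theorem lemma6p2 (K : fieldType) (hchar : [pchar K] =i pred0)
  (lam : nat) (b c d : {mpoly K[3]})
  (hlam : (0 < lam)%N)
  (hc : in_Kxy c)
  (hd : mirreducible d)
  (hb_prim : primitive_yz b) (hc_prim : primitive_yz c) (hd_prim : primitive_yz d)
  (hdeg : (degz b < degz d)%N)
  (m : nat) (n k : int)
  (hm : (0 < m)%N)
  (hmd : shift (Posz m) 0 0 d = shift 0 n k d)
  (hmin : forall (m' : nat) (n' k' : int), (0 < m' < m)%N ->
            shift (Posz m') 0 0 d <> shift 0 n' k' d)
  (hcase :
     (exists (n1 n2 : nat) (k1 k2 : int), [/\ (0 < n1)%N, (0 < n2)%N,
          shift 0 (Posz n1) 0 d = shift 0 0 k1 d &
          shift (Posz n2) 0 0 c = shift 0 k2 0 c])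
     \/
     (exists t : nat, (0 < t)%N /\
          shift (Posz (t * m)) 0 0 c = shift 0 ((Posz t) * n) 0 c)) :
  has_telescoper (b%:F / (c%:F * d%:F ^+ lam)).
Proof.
have c0 := primitive_yz_neq0 hc_prim; have d0 := mirreducible_neq0 hd.
have [M [A [B [M_gt0 [hcM hdM]]]]] : exists (M : nat) (A B : int),
    (0 < M)%N /\ (shift_fixed c M A B /\ shift_fixed d M A B).
  case: hcase => [[n1 [n2 [k1 [k2 [n1_gt0 n2_gt0 hd1 hc2]]]]] | [t [t_gt0 hct]]].
    exists (m * n1 * n2)%N; do 2 eexists; split; first by rewrite !muln_gt0 hm n1_gt0 n2_gt0.
    exact: common_period_yz hc hmd hd1 hc2.
  exists (t * m)%N; do 2 eexists; split; first by rewrite muln_gt0 t_gt0 hm.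
  exact: common_period_power hc hmd hct.
have hq : shift_fixed (c * d ^+ lam) M A B by rewrite /shift_fixed rmorphM rmorphXn /= hcM hdM.
rewrite -tofracXn -tofracM; apply: (has_telescoper_shift_fixed b _ M_gt0 hq).
by rewrite mulf_neq0 ?expf_neq0.
Qed.
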